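(* Let $G$ be a finite group, $k$ a positive integer, $a_1,\dots,a_k,b_1,\dots,b_k$ independent uniformly random elements of $G$, and for $(i,j)\in V=[k]\times[k]$ and $x\in G$ let $I_{(i,j)}(x)$ be the indicator of the event $\{x=a_ib_j \text{ or } x=b_ja_i\}$. Let $\Gamma=(V,E)$ be the graph with $(i,j)\sim(\ell,m)$ iff ($i=\ell$ and $j\ne m$) or ($i\ne \ell$ and $j=m$). For $x\ne y\in G$, let $\Gamma_{x,y}$ be the graph on vertex set $V\times\{x,y\}$ in which $(v,z)\sim(u,z')$ iff $\{v,u\}\in E$ (for all $v,u\in V$, $z,z'\in\{x,y\}$), and set $J(v,z)=I_v(z)$. Then for any $x\ne y\in G$, $\Gamma_{x,y}$ is a dependency graph for the family $\{J(v,z)\}_{(v,z)\in V\times\{x,y\}}=\{I_v(x),I_v(y)\}_{v\in V}$.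
   Context: $[k]=\{1,\dots,k\}$. A graph on the index set $W$ of a family of random variables $\{X_w\}_{w\in W}$ is a dependency graph for the family if for any two disjoint subsets $S,T\subseteq W$ with no edge between $S$ and $T$, the families $\{X_w\}_{w\in S}$ and $\{X_w\}_{w\in T}$ are independent of each other.
   Formalization: In $\Gamma_{x,y}$, (v,z) ∼ (u,z′) iff {v,u} ∈ E or v = u and z ≠ z′, so (v,x) and (v,y) are also adjacent for every v ∈ V. The statement above fails without it. *)

From mathcomp Require Import all_boot all_order all_algebra all_fingroup.
Set Implicit Arguments. Unset Strict Implicit. Unset Printing Implicit Defensive.
Import GRing.Theory Num.Theory.
Local Open Scope ring_scope.

Definition uprob (Omega : finType) (A : pred Omega) : rat :=
  (#|A|%:R / #|Omega|%:R)%R.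

Definition indep_families (Omega W Val : finType) (X : W -> Omega -> Val)
    (S T : {set W}) : Prop :=
  forall f g : {ffun W -> Val},
    uprob [pred om | [forall s in S, X s om == f s] &&
                     [forall t in T, X t om == g t]]
    = uprob [pred om | [forall s in S, X s om == f s]] *
      uprob [pred om | [forall t in T, X t om == g t]].

Definition dependency_graph (Omega W Val : finType) (e : rel W)
    (X : W -> Omega -> Val) : Prop :=
  forall S T : {set W}, [disjoint S & T] ->
    (forall s t, s \in S -> t \in T -> ~~ e s t) ->
    indep_families X S T.

(* Sample space: (a_1..a_k, b_1..b_k), uniform. *)
Definition sample (gT : finGroupType) (k : nat) : finType :=
  ({ffun 'I_k -> gT} * {ffun 'I_k -> gT})%type.

Definition vtx (k : nat) : finType := ('I_k * 'I_k)%type.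

Definition Ind (gT : finGroupType) (k : nat) (v : vtx k) (x : gT)
    (om : sample gT k) : bool :=
  (x == (om.1 v.1 * om.2 v.2)%g) || (x == (om.2 v.2 * om.1 v.1)%g).

Definition gamma_edge (k : nat) : rel (vtx k) :=
  fun v u => ((v.1 == u.1) && (v.2 != u.2)) || ((v.1 != u.1) && (v.2 == u.2)).

(* Gamma_{x,y} on V x {x,y}, with {x,y} encoded by bool (false = x, true = y).
   (v,z) ~ (u,z') iff {v,u} in E, or v = u and z <> z'. *)
Definition gamma_xy_edge (k : nat) : rel (vtx k * bool) :=
  fun p q => gamma_edge p.1 q.1 || ((p.1 == q.1) && (p.2 != q.2)).

Definition zsel (gT : finGroupType) (x y : gT) (b : bool) : gT :=
  if b then y else x.

Definition Jfam (gT : finGroupType) (k : nat) (x y : gT)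
    (p : vtx k * bool) (om : sample gT k) : bool :=
  Ind p.1 (zsel x y p.2) om.

From mathcomp Require Import all_boot all_order all_algebra all_fingroup.
From mathcomp Require Import ring.
Set Implicit Arguments. Unset Strict Implicit. Unset Printing Implicit Defensive.
Import GRing.Theory Num.Theory.
Local Open Scope ring_scope.

(* If S and T are not adjacent in Gamma_{x,y}, no row index i and no column
   index j is used by both, so the events indexed by S only read the entries
   a_i, b_j with (i, j) in rows(S) x cols(S), and those indexed by T only read
   the remaining entries.  Splicing two samples along this partition of the
   coordinates shows that the joint law factors. *)

Lemma card_predI_mul_of_mixing (O : finType) (m : O -> O -> O) (P Q : pred O) :
  (forall a b, m (m a b) (m b a) = a) ->
  (forall a b, P (m a b) = P a) -> (forall a b, Q (m a b) = Q b) ->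
  (#|[pred a | P a && Q a]| * #|O| = #|P| * #|Q|)%N.
Proof.
move=> mK mP mQ.
pose F (p : O * O) := (m p.1 p.2, m p.2 p.1).
have injF : injective F.
  move=> [a b] [c d]; rewrite /F /= => -[eab eba].
  by congr pair; [rewrite -(mK a b) eab eba mK | rewrite -(mK b a) eab eba mK].
(* The preimage of (P && Q) * O under the bijection F is P * Q. *)
rewrite -[#|O|](@eq_card _ predT) // -!cardX -cardsE -(card_preimset _ injF).
by apply: eq_card => -[a b]; rewrite !inE /= mP mQ andbT.
Qed.

Lemma uprob_predI (O : finType) (P Q : pred O) :
  (#|[pred a | P a && Q a]| * #|O| = #|P| * #|Q|)%N ->
  uprob [pred a | P a && Q a] = uprob [pred a | P a] * uprob [pred a | Q a].
Proof.
rewrite /uprob; set n := #|O|; set c := #|_|; set p := #|P|; set q := #|Q|.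
move=> cardPQ.
have [->|n0] := eqVneq n 0%N; first by rewrite !invr0 !mulr0.
have n0' : (n%:R : rat) != 0 by rewrite pnatr_eq0.
apply: (mulIf n0'); rewrite divfK // -[c%:R](mulfK n0') -natrM cardPQ natrM.
by field.
Qed.

Lemma uprob_predI_of_mixing (O : finType) (m : O -> O -> O) (P Q : pred O) :
  (forall a b, m (m a b) (m b a) = a) ->
  (forall a b, P (m a b) = P a) -> (forall a b, Q (m a b) = Q b) ->
  uprob [pred a | P a && Q a] = uprob [pred a | P a] * uprob [pred a | Q a].
Proof.
by move=> mK mP mQ; apply: uprob_predI; apply: card_predI_mul_of_mixing mK mP mQ.
Qed.

Section Splicing.

Variables (gT : finGroupType) (k : nat).

Definition rows (S : {set vtx k * bool}) := [set s.1.1 | s in S].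
Definition cols (S : {set vtx k * bool}) := [set s.1.2 | s in S].

Lemma gamma_xy_nonadj (s t : vtx k * bool) :
  s != t -> ~~ gamma_xy_edge s t -> (s.1.1 != t.1.1) && (s.1.2 != t.1.2).
Proof.
case: s t => [[i j] z] [[i' j'] z'].
rewrite /gamma_xy_edge /gamma_edge /= !xpair_eqE /=.
by case: (eqVneq i i'); case: (eqVneq j j'); case: (eqVneq z z').
Qed.

Lemma nonadj_notin_rows_cols (S T : {set vtx k * bool}) t :
  [disjoint S & T] -> (forall s t, s \in S -> t \in T -> ~~ gamma_xy_edge s t) ->
  t \in T -> (t.1.1 \notin rows S) && (t.1.2 \notin cols S).
Proof.
move=> dST noE tT.
have nonadj s : s \in S -> (s.1.1 != t.1.1) && (s.1.2 != t.1.2).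
  move=> sS; apply: gamma_xy_nonadj _ (noE s t sS tT).
  by apply: contraTneq sS => ->; rewrite (disjointFl dST tT).
apply/andP; split; apply/imsetP => -[s /nonadj /andP[/eqP ne1 /eqP ne2] e].
- exact: ne1 (esym e).
- exact: ne2 (esym e).
Qed.

Definition splice (A B : {set 'I_k}) (a b : sample gT k) : sample gT k :=
  ([ffun i => if i \in A then a.1 i else b.1 i],
   [ffun j => if j \in B then a.2 j else b.2 j]).

Lemma spliceK (A B : {set 'I_k}) (a b : sample gT k) :
  splice A B (splice A B a b) (splice A B b a) = a.
Proof.
by case: a b => [a1 a2] [b1 b2]; congr pair; apply/ffunP => i;
  rewrite !ffunE; case: (_ \in _).
Qed.

Lemma Ind_splice_in (A B : {set 'I_k}) (v : vtx k) (z : gT) (a b : sample gT k) :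
  v.1 \in A -> v.2 \in B -> Ind v z (splice A B a b) = Ind v z a.
Proof. by move=> vA vB; rewrite /Ind /= !ffunE vA vB. Qed.

Lemma Ind_splice_out (A B : {set 'I_k}) (v : vtx k) (z : gT) (a b : sample gT k) :
  v.1 \notin A -> v.2 \notin B -> Ind v z (splice A B a b) = Ind v z b.
Proof. by move=> vA vB; rewrite /Ind /= !ffunE (negbTE vA) (negbTE vB). Qed.

End Splicing.

Theorem proposition4p4 (gT : finGroupType) (k : nat) (x y : gT) :
  (0 < k)%N -> x != y ->
  dependency_graph (@gamma_xy_edge k) (Jfam x y).
Proof.
move=> _ _ S T dST noE f g.
apply: (uprob_predI_of_mixing (m := splice (rows S) (cols S))) => a b.
- exact: spliceK.
- apply: eq_forallb_in => s sS.
  by rewrite /Jfam Ind_splice_in //; apply: imset_f.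
- apply: eq_forallb_in => t tT.
  have /andP[tA tB] := nonadj_notin_rows_cols dST noE tT.
  by rewrite /Jfam Ind_splice_out.
Qed.
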